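(* Let $\bar A_1,\bar A_2$ be arrival processes such that $\bar A_i$ is $(\lambda_i,\nu_i)$-constrained for $i=1,2$, with $\lambda_i>0$, $\nu_i\ge 0$. Then their superposition (aggregate process) $\bar A$ is $(\lambda,\nu)$-constrained with $$\lambda=\lambda_1+\lambda_2,\qquad \nu=\nu_1+\nu_2+1.$$
   Context: An arrival process is described by its arrival time function: a nondecreasing sequence $(\bar A(n))_{n\ge 1}$ of nonnegative real numbers, where $\bar A(n)$ is the arrival time of packet $n$. By convention $\bar A(0)=0$, and $\bar A(m,n):=\bar A(n)-\bar A(m)$ for integers $n\ge m\ge 0$. Write $x^+=\max\{x,0\}$. For constants $\lambda>0$ and $\nu\ge 0$, the process is called $(\lambda,\nu)$-constrained if $\bar A(m,n)\ge \frac{1}{\lambda}(n-m-\nu)^+$ for all integers $n\ge m\ge 0$. The superposition (aggregate) of arrival processes $\bar A_1,\dots,\bar A_I$ (each with $\bar A_i(0)=0$) is the arrival process $\bar A$ given by $\bar A(n)=\inf\{\max_{1\le i\le I}\bar A_i(m_i): m_1,\dots,m_I\ge 0 \text{ integers},\ m_1+\cdots+m_I=n\}$ for $n\ge 0$; equivalently, $\bar A(n)$ is the $n$-th smallest element (counted with multiplicity) of the multiset of all packet arrival times $\{\bar A_i(k): 1\le i\le I,\ k\ge 1\}$. *)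

From Stdlib Require Import Reals Lra Lia.
Open Scope R_scope.

(** An arrival process: arrival time function n |-> A n (A 0 = 0 by convention),
    nonnegative and nondecreasing. *)
Definition arrival_process (A : nat -> R) : Prop :=
  A 0%nat = 0 /\
  (forall n, 0 <= A n) /\
  (forall m n, (m <= n)%nat -> A m <= A n).

Definition incr (A : nat -> R) (m n : nat) : R := A n - A m.

Definition constrained (lam nu : R) (A : nat -> R) : Prop :=
  forall m n : nat, (m <= n)%nat ->
    incr A m n >= / lam * Rmax (INR n - INR m - nu) 0.

Fixpoint min_upto (f : nat -> R) (n : nat) : R :=
  match n with
  | O => f O
  | S k => Rmin (min_upto f k) (f (S k))
  end.

(** Superposition of two arrival processes:
    A n = inf { max (A1 m1, A2 m2) : m1 + m2 = n }, which for two processes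
    is the minimum over the finitely many splits m1 = 0..n, m2 = n - m1. *)
Definition superpose2 (A1 A2 : nat -> R) (n : nat) : R :=
  min_upto (fun m1 => Rmax (A1 m1) (A2 (n - m1)%nat)) n.

(* If the aggregate has delivered n packets by time A(n) = max (A1 a, A2 b)
   with a + b = n, then m = n - k packets were already delivered earlier:
   remove x packets from stream 1 and k - x from stream 2.  Taking x least
   with (x - nu1)/lam1 >= D, where D = (k - nu1 - nu2 - 1)^+ / (lam1 + lam2),
   the minimality of x leaves enough slack that also (k - x - nu2)/lam2 >= D,
   so both streams had reached their reduced counts by time A(n) - D. *)

From Stdlib Require Import Reals Lra Lia Wf_nat.
Open Scope R_scope.

Definition arrival_bound (lam nu : R) (k : nat) : R := / lam * Rmax (INR k - nu) 0.

Lemma arrival_bound_ge0 lam nu k : 0 < lam -> 0 <= arrival_bound lam nu k.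
Proof.
  intros Hlam. apply Rmult_le_pos; [left; apply Rinv_0_lt_compat; lra | apply Rmax_r].
Qed.

Lemma arrival_bound_le lam nu j k :
  0 < lam -> (j <= k)%nat -> arrival_bound lam nu j <= arrival_bound lam nu k.
Proof.
  intros Hlam Hjk. apply Rmult_le_compat_l; [left; apply Rinv_0_lt_compat; lra |].
  apply le_INR in Hjk. unfold Rmax; repeat destruct Rle_dec; lra.
Qed.

Lemma le_arrival_bound lam nu k d :
  0 < lam -> lam * d <= INR k - nu -> d <= arrival_bound lam nu k.
Proof.
  intros Hlam Hd. unfold arrival_bound.
  replace d with (/ lam * (lam * d)) by (field; lra).
  apply Rmult_le_compat_l; [left; apply Rinv_0_lt_compat; lra |].
  eapply Rle_trans; [exact Hd | apply Rmax_l].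
Qed.

Lemma arrival_bound_lt lam nu k d :
  0 < lam -> arrival_bound lam nu k < d -> INR k - nu < lam * d.
Proof.
  intros Hlam Hd. unfold arrival_bound in Hd.
  apply (Rmult_lt_compat_l lam) in Hd; [| lra].
  rewrite <- Rmult_assoc, Rinv_r, Rmult_1_l in Hd by lra.
  eapply Rle_lt_trans; [apply Rmax_l | exact Hd].
Qed.

Lemma arrival_bound_pos lam nu k :
  0 < lam -> 0 < arrival_bound lam nu k -> lam * arrival_bound lam nu k = INR k - nu.
Proof.
  intros Hlam Hpos. unfold arrival_bound in *.
  destruct (Rle_dec (INR k - nu) 0) as [Hle | Hgt].
  - rewrite Rmax_right, Rmult_0_r in Hpos by lra. lra.
  - rewrite Rmax_left by lra. field. lra.
Qed.

Lemma arrival_bound_sum_le lam1 lam2 nu1 nu2 k :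
  0 < lam1 -> 0 < lam2 -> 0 <= nu2 ->
  arrival_bound (lam1 + lam2) (nu1 + nu2 + 1) k <= arrival_bound lam1 nu1 k.
Proof.
  intros Hl1 Hl2 Hn2. set (D := arrival_bound _ _ k).
  destruct (Rle_lt_dec D 0) as [HD | HD].
  - eapply Rle_trans; [exact HD | apply arrival_bound_ge0; lra].
  - apply le_arrival_bound; [lra |].
    pose proof (arrival_bound_pos (lam1 + lam2) (nu1 + nu2 + 1) k ltac:(lra) HD) as HkD.
    fold D in HkD. nra.
Qed.

Lemma arrival_bound_complement lam1 lam2 nu1 nu2 k x :
  0 < lam1 -> 0 < lam2 -> (x < k)%nat ->
  arrival_bound lam1 nu1 x < arrival_bound (lam1 + lam2) (nu1 + nu2 + 1) k ->
  arrival_bound (lam1 + lam2) (nu1 + nu2 + 1) k <= arrival_bound lam2 nu2 (k - S x).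
Proof.
  intros Hl1 Hl2 Hxk Hlt. set (D := arrival_bound _ _ k) in *.
  assert (HD : 0 < D) by (pose proof (arrival_bound_ge0 lam1 nu1 x Hl1); lra).
  pose proof (arrival_bound_pos (lam1 + lam2) (nu1 + nu2 + 1) k ltac:(lra) HD) as HkD.
  pose proof (arrival_bound_lt lam1 nu1 x D Hl1 Hlt) as HxD.
  fold D in HkD. apply le_arrival_bound; [lra |].
  rewrite minus_INR, S_INR by lia. lra.
Qed.

Lemma arrival_bound_split lam1 lam2 nu1 nu2 k :
  0 < lam1 -> 0 < lam2 -> 0 <= nu1 -> 0 <= nu2 ->
  exists x, (x <= k)%nat /\
    arrival_bound (lam1 + lam2) (nu1 + nu2 + 1) k <= arrival_bound lam1 nu1 x /\
    arrival_bound (lam1 + lam2) (nu1 + nu2 + 1) k <= arrival_bound lam2 nu2 (k - x).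
Proof.
  intros Hl1 Hl2 Hn1 Hn2. set (D := arrival_bound _ _ k).
  set (P := fun x => D <= arrival_bound lam1 nu1 x).
  assert (HPk : P k) by (apply arrival_bound_sum_le; lra).
  destruct (dec_inh_nat_subset_has_unique_least_element P) as [x [[HPx Hleast] _]].
  { intros y. destruct (Rle_dec D (arrival_bound lam1 nu1 y)); [left | right]; assumption. }
  { exists k. exact HPk. }
  assert (Hxk : (x <= k)%nat) by (apply Hleast; exact HPk).
  exists x. split; [exact Hxk | split; [exact HPx |]].
  destruct x as [| y].
  - rewrite Nat.sub_0_r. unfold D.
    rewrite (Rplus_comm lam1), (Rplus_comm nu1). apply arrival_bound_sum_le; lra.
  - apply arrival_bound_complement; [lra | lra | lia |].
    apply Rnot_le_lt. intros HPy. specialize (Hleast y HPy). lia.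
Qed.

Lemma constrainedE lam nu A :
  constrained lam nu A <->
  forall m n, (m <= n)%nat -> A m + arrival_bound lam nu (n - m) <= A n.
Proof.
  unfold constrained, incr, arrival_bound.
  split; intros H m n Hmn; specialize (H m n Hmn); rewrite minus_INR in * by lia; lra.
Qed.

Lemma constrained_gap lam nu A c x a :
  0 < lam -> constrained lam nu A -> (c + x <= a)%nat ->
  A c + arrival_bound lam nu x <= A a.
Proof.
  intros Hlam HA Hcxa. apply constrainedE with (m := c) (n := a) in HA; [| lia].
  pose proof (arrival_bound_le lam nu x (a - c) Hlam ltac:(lia)). lra.
Qed.

Lemma min_upto_le f n j : (j <= n)%nat -> min_upto f n <= f j.
Proof.
  induction n as [| n IHn]; intros Hj; simpl.
  - replace j with 0%nat by lia. lra.
  - destruct (Nat.eq_dec j (S n)) as [-> | Hne]; [apply Rmin_r |].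
    eapply Rle_trans; [apply Rmin_l | apply IHn; lia].
Qed.

Lemma min_upto_attained f n : exists j, (j <= n)%nat /\ min_upto f n = f j.
Proof.
  induction n as [| n [j [Hj Heq]]]; simpl.
  - exists 0%nat. split; reflexivity.
  - unfold Rmin. destruct Rle_dec.
    + exists j. split; [lia | exact Heq].
    + exists (S n). split; reflexivity.
Qed.

Lemma superpose2_attained A1 A2 n :
  exists a, (a <= n)%nat /\ superpose2 A1 A2 n = Rmax (A1 a) (A2 (n - a)%nat).
Proof. apply min_upto_attained. Qed.

Lemma superpose2_le_of_split A1 A2 m c t :
  (c <= m)%nat -> A1 c <= t -> A2 (m - c)%nat <= t -> superpose2 A1 A2 m <= t.
Proof.
  intros Hc H1 H2. eapply Rle_trans.
  - exact (min_upto_le (fun j => Rmax (A1 j) (A2 (m - j)%nat)) m c Hc).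
  - apply Rmax_lub; assumption.
Qed.

(* Whichever stream runs out of packets to remove is drawn down to its origin
   A_i 0 = 0, and nonnegativity of the other stream covers it. *)
Lemma superpose2_earlier A1 A2 lam1 lam2 nu1 nu2 m n a x d :
  arrival_process A1 -> arrival_process A2 -> 0 < lam1 -> 0 < lam2 ->
  constrained lam1 nu1 A1 -> constrained lam2 nu2 A2 ->
  (m <= n)%nat -> (a <= n)%nat -> (x <= n - m)%nat ->
  d <= arrival_bound lam1 nu1 x -> d <= arrival_bound lam2 nu2 (n - m - x) ->
  superpose2 A1 A2 m + d <= Rmax (A1 a) (A2 (n - a)%nat).
Proof.
  intros [HA10 [HA1 _]] [HA20 [HA2 _]] Hl1 Hl2 C1 C2 Hmn Ha Hx H1 H2.
  pose proof (Rmax_l (A1 a) (A2 (n - a)%nat)). pose proof (Rmax_r (A1 a) (A2 (n - a)%nat)).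
  enough (superpose2 A1 A2 m <= Rmax (A1 a) (A2 (n - a)%nat) - d) by lra.
  destruct (Compare_dec.le_lt_dec x a) as [Hxa | Hax];
    [destruct (Compare_dec.le_lt_dec (n - m - x) (n - a)) as [Hyb | Hby] |].
  - apply (superpose2_le_of_split _ _ _ (a - x)); [lia | |].
    + pose proof (constrained_gap _ _ _ (a - x) x a Hl1 C1 ltac:(lia)). lra.
    + pose proof (constrained_gap _ _ _ (m - (a - x)) (n - m - x) (n - a) Hl2 C2
        ltac:(lia)). lra.
  - apply (superpose2_le_of_split _ _ _ m); [lia | |].
    + pose proof (constrained_gap _ _ _ m x a Hl1 C1 ltac:(lia)). lra.
    + pose proof (constrained_gap _ _ _ m x a Hl1 C1 ltac:(lia)).
      pose proof (HA1 m). rewrite Nat.sub_diag, HA20. lra.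
  - apply (superpose2_le_of_split _ _ _ 0); [lia | |]; rewrite ?Nat.sub_0_r.
    + pose proof (constrained_gap _ _ _ m (n - m - x) (n - a) Hl2 C2 ltac:(lia)).
      pose proof (HA2 m). rewrite HA10. lra.
    + pose proof (constrained_gap _ _ _ m (n - m - x) (n - a) Hl2 C2 ltac:(lia)). lra.
Qed.

Theorem lemma5 (A1 A2 : nat -> R) (lam1 lam2 nu1 nu2 : R) :
  arrival_process A1 -> arrival_process A2 ->
  0 < lam1 -> 0 < lam2 -> 0 <= nu1 -> 0 <= nu2 ->
  constrained lam1 nu1 A1 -> constrained lam2 nu2 A2 ->
  constrained (lam1 + lam2) (nu1 + nu2 + 1) (superpose2 A1 A2).
Proof.
  intros HA1 HA2 Hl1 Hl2 Hn1 Hn2 C1 C2.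
  apply constrainedE. intros m n Hmn.
  destruct (superpose2_attained A1 A2 n) as [a [Ha ->]].
  destruct (arrival_bound_split lam1 lam2 nu1 nu2 (n - m) Hl1 Hl2 Hn1 Hn2)
    as [x [Hx [H1 H2]]].
  exact (superpose2_earlier A1 A2 lam1 lam2 nu1 nu2 m n a x _
           HA1 HA2 Hl1 Hl2 C1 C2 Hmn Ha Hx H1 H2).
Qed.
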